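(* Let $n\ge2$, $\omega\in\mathbb{R}^n$, $k\in\mathbb{R}_{>0}^n$ satisfy (IC1) $\sum_\mu\omega_\mu=0$, (IC2) $\omega\ne0$, (IC3) $\left|\frac{\omega_1}{k_1}\right|\le\cdots\le\left|\frac{\omega_n}{k_n}\right|$, and (IC4) $k_1\ge k_2\ge\cdots\ge k_n$. For $\sigma\in\{-1,+1\}^n$ let $f_\sigma(R)=-R+\frac1n\sum_{\mu=1}^n\sigma_\mu\sqrt{k_\mu^2R-\omega_\mu^2}$. Let $\sigma\in\{-1,+1\}^n$ and indices $\mu<\nu$ with $\sigma_\mu=+1$, $\sigma_\nu=-1$, and let $\sigma'$ agree with $\sigma$ except that $\sigma'_\mu=-1$ and $\sigma'_\nu=+1$. If $f_\sigma$ has no positive roots, then $f_{\sigma'}$ has no positive roots.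
   Context: Square roots are nonnegative real square roots; a positive root of $f_\sigma$ is a real $R>0$ with $k_\mu^2R-\omega_\mu^2\ge0$ for all $\mu$ and $f_\sigma(R)=0$. *)

From HB Require Import structures.
From mathcomp Require Import all_boot all_order all_algebra.
From mathcomp Require Import reals.
Set Implicit Arguments. Unset Strict Implicit. Unset Printing Implicit Defensive.
Import Order.TTheory GRing.Theory Num.Theory.
Local Open Scope ring_scope.

(* A sign vector sigma in {-1,+1}^n is encoded as 'I_n -> bool,
   true meaning +1 and false meaning -1. *)
Definition sgnb {R : realType} (b : bool) : R := if b then 1 else -1.

Definition fsig {R : realType} (n : nat) (omega k : 'I_n -> R)
  (sigma : 'I_n -> bool) (x : R) : R :=
  - x + n%:R^-1 * \sum_(i < n) sgnb (sigma i) * Num.sqrt (k i ^+ 2 * x - omega i ^+ 2).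

Definition pos_root {R : realType} (n : nat) (omega k : 'I_n -> R)
  (sigma : 'I_n -> bool) (x : R) : Prop :=
  0 < x /\ (forall i, 0 <= k i ^+ 2 * x - omega i ^+ 2) /\ fsig omega k sigma x = 0.

Definition swap_sig (n : nat) (sigma : 'I_n -> bool) (mu nu : 'I_n) : 'I_n -> bool :=
  fun i => if i == mu then false else if i == nu then true else sigma i.

From HB Require Import structures.
From mathcomp Require Import all_boot all_order all_algebra.
From mathcomp Require Import reals.
From mathcomp Require Import topology normedtype realfun.
From mathcomp Require Import ring lra.
Import Order.TTheory GRing.Theory Num.Theory.
Import numFieldNormedType.Exports.
Local Open Scope ring_scope.

(* Swapping the signs at mu < nu lowers f by (2/n)(sqrt r_mu - sqrt r_nu), where
   r_i = k_i^2 x - omega_i^2, and (IC3), (IC4) give r_nu <= r_mu wherever r_nu >= 0.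
   So at a positive root x0 of f_sigma' we get f_sigma(x0) >= 0.  Since
   f_sigma(x) <= -x + (mean of the k_i) sqrt x, f_sigma is nonpositive further right,
   and the intermediate value theorem yields a root of f_sigma beyond x0, where all
   radicands are still nonnegative because they increase with x. *)

Lemma radicand_le (R : realFieldType) (w1 w2 k1 k2 x : R) :
  0 < k2 -> k2 <= k1 -> `|w1 / k1| <= `|w2 / k2| ->
  0 <= k2 ^+ 2 * x - w2 ^+ 2 -> k2 ^+ 2 * x - w2 ^+ 2 <= k1 ^+ 2 * x - w1 ^+ 2.
Proof.
move=> k2_gt0 k21 ratio_le rad2_ge0.
have k1_gt0 : 0 < k1 := lt_le_trans k2_gt0 k21.
set a := w1 / k1; set b := w2 / k2.
have -> : w1 = a * k1 by rewrite /a divfK ?gt_eqF.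
have -> : w2 = b * k2 by rewrite /b divfK ?gt_eqF.
have sqr_ab : a ^+ 2 <= b ^+ 2.
  by rewrite -(real_normK (num_real a)) -(real_normK (num_real b)) lerXn2r ?nnegrE.
have b2_le_x : b ^+ 2 <= x.
  move: rad2_ge0; rewrite /b (_ : k2 ^+ 2 * x - w2 ^+ 2 = k2 ^+ 2 * (x - b ^+ 2)).
    by rewrite pmulr_rge0 ?exprn_gt0 // subr_ge0.
  by rewrite /b; field; rewrite gt_eqF.
have sqr_k : k2 ^+ 2 <= k1 ^+ 2 by rewrite lerXn2r ?nnegrE ?(ltW k2_gt0) ?(ltW k1_gt0).
rewrite (_ : k2 ^+ 2 * x - (b * k2) ^+ 2 = k2 ^+ 2 * (x - b ^+ 2)); last by ring.
rewrite (_ : k1 ^+ 2 * x - (a * k1) ^+ 2 = k1 ^+ 2 * (x - a ^+ 2)); last by ring.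
apply: le_trans (ler_wpM2r _ sqr_k) _; first by rewrite subr_ge0.
by rewrite ler_wpM2l ?sqr_ge0 // lerD2l lerN2.
Qed.

Section SignedSum.
Context {R : realType} {n : nat} {omega k : 'I_n -> R}.

Lemma continuous_fsig (s : 'I_n -> bool) : continuous (fsig omega k s).
Proof.
have radical_cont i : continuous (fun x : R => Num.sqrt (k i ^+ 2 * x - omega i ^+ 2)).
  move=> x; apply: (continuous_comp (f := fun x : R => k i ^+ 2 * x - omega i ^+ 2)).
    exact: cvgD (cvgM (cvg_cst _) cvg_id) (cvg_cst _).
  exact: sqrt_continuous.
have sum_cont : continuous (fun x : R =>
    \sum_(i < n) sgnb (s i) * Num.sqrt (k i ^+ 2 * x - omega i ^+ 2)).
  apply: continuous_big; first exact: add_continuous.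
  by move=> i _ x; apply: cvgM (cvg_cst _) (radical_cont i x).
by move=> x; apply: cvgD (cvgN cvg_id) (cvgM (cvg_cst _) (sum_cont x)).
Qed.

Lemma fsig_swap_sig (sigma : 'I_n -> bool) (mu nu : 'I_n) (x : R) :
  mu != nu -> sigma mu -> ~~ sigma nu ->
  fsig omega k sigma x = fsig omega k (swap_sig sigma mu nu) x +
    n%:R^-1 * (2 * Num.sqrt (k mu ^+ 2 * x - omega mu ^+ 2)
               - 2 * Num.sqrt (k nu ^+ 2 * x - omega nu ^+ 2)).
Proof.
move=> mu_neq_nu sigma_mu sigma_nu; rewrite /fsig -addrA -mulrDr.
congr (_ + _ * _).
set r := fun i => Num.sqrt (k i ^+ 2 * x - omega i ^+ 2).
rewrite (eq_bigr (fun i => sgnb (swap_sig sigma mu nu i) * r i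
   + ((if i == mu then 2 * r i else 0) - (if i == nu then 2 * r i else 0)))).
  by rewrite big_split big_split /= sumrN -!big_mkcond !big_pred1_eq.
move=> i _; rewrite /swap_sig /sgnb /r.
case: eqP => [->|_]; first by rewrite (negbTE mu_neq_nu) sigma_mu; ring.
case: eqP => [->|_]; first by rewrite (negbTE sigma_nu); ring.
by case: (sigma i); ring.
Qed.

Lemma fsig_le_mean (s : 'I_n -> bool) (x : R) : 0 <= x ->
  fsig omega k s x <= - x + n%:R^-1 * (\sum_(i < n) `|k i|) * Num.sqrt x.
Proof.
move=> x_ge0; rewrite /fsig lerD2l -mulrA ler_wpM2l ?invr_ge0 // mulr_suml.
apply: ler_sum => i _.
have radical_le : Num.sqrt (k i ^+ 2 * x - omega i ^+ 2) <= `|k i| * Num.sqrt x.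
  rewrite -sqrtr_sqr -sqrtrM ?sqr_ge0 // ler_sqrt ?(mulr_ge0 (sqr_ge0 _) x_ge0) //.
  by rewrite gerDl oppr_le0 sqr_ge0.
apply: le_trans radical_le; have := sqrtr_ge0 (k i ^+ 2 * x - omega i ^+ 2).
by rewrite /sgnb; case: (s i); lra.
Qed.

Lemma fsig_nonpos_beyond (s : 'I_n -> bool) (x0 : R) : 0 <= x0 ->
  exists2 b, x0 <= b & fsig omega k s b <= 0.
Proof.
move=> x0_ge0; set S := n%:R^-1 * \sum_(i < n) `|k i|.
exists (Num.max x0 (S ^+ 2)); first by rewrite le_max lexx.
set b := Num.max x0 (S ^+ 2).
have b_ge0 : 0 <= b by rewrite le_max x0_ge0.
apply: le_trans (fsig_le_mean s _ b_ge0) _; rewrite -/S.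
have S_le : S <= Num.sqrt b.
  by rewrite (le_trans (ler_norm S)) // -sqrtr_sqr ler_sqrt // le_max lexx orbT.
have sqrt_b : Num.sqrt b * Num.sqrt b = b by rewrite -expr2 sqr_sqrtr.
have := ler_wpM2r (sqrtr_ge0 b) S_le; lra.
Qed.

Lemma pos_root_of_fsig_ge0 (s : 'I_n -> bool) (x0 : R) :
  0 < x0 -> (forall i, 0 <= k i ^+ 2 * x0 - omega i ^+ 2) -> 0 <= fsig omega k s x0 ->
  exists x, pos_root omega k s x.
Proof.
move=> x0_gt0 rad_ge0 f_ge0.
have [b x0_le_b f_le0] := fsig_nonpos_beyond s _ (ltW x0_gt0).
have [|c] := @IVT R (fsig omega k s) x0 b 0 x0_le_b
    (continuous_subspaceT (continuous_fsig s)).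
  by rewrite ge_min le_max f_ge0 f_le0 orbT.
rewrite in_itv /= => /andP[x0_le_c _] f_c.
exists c; split; first exact: lt_le_trans x0_le_c.
split => // i; apply: le_trans (rad_ge0 i) _.
by rewrite lerD2r ler_wpM2l ?sqr_ge0.
Qed.

End SignedSum.

Theorem lemma4 (R : realType) (n : nat) (omega k : 'I_n -> R)
  (hn : (2 <= n)%N)
  (hk : forall i, 0 < k i)
  (IC1 : \sum_(i < n) omega i = 0)
  (IC2 : exists i, omega i != 0)
  (IC3 : forall i j : 'I_n, (i <= j)%N -> `|omega i / k i| <= `|omega j / k j|)
  (IC4 : forall i j : 'I_n, (i <= j)%N -> k j <= k i)
  (sigma : 'I_n -> bool) (mu nu : 'I_n)
  (hmunu : (mu < nu)%N) (hsmu : sigma mu = true) (hsnu : sigma nu = false) :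
  (~ exists x : R, pos_root omega k sigma x) ->
  ~ exists x : R, pos_root omega k (swap_sig sigma mu nu) x.
Proof.
move=> no_root [x0 [x0_gt0 [rad_ge0 f'_x0]]]; apply: no_root.
apply: (pos_root_of_fsig_ge0 sigma x0 x0_gt0 rad_ge0).
have mu_neq_nu : mu != nu by rewrite neq_ltn hmunu.
rewrite (fsig_swap_sig sigma mu nu x0 mu_neq_nu) ?hsmu ?hsnu // f'_x0 add0r.
rewrite mulr_ge0 ?invr_ge0 // subr_ge0 ler_pM2l ?ltr0n // ler_sqrt ?rad_ge0 //.
have mu_le_nu : (mu <= nu)%N := ltnW hmunu.
by apply: radicand_le; [exact: hk | exact: IC4 | exact: IC3 | exact: rad_ge0].
Qed.
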